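(* (Ważewski property) Let $\varphi$ be a random homeomorphism and $S$ a random isolated invariant set for $\varphi$ whose random Conley index is nontrivial, i.e. $h(S,\varphi)\neq\underline 0$. If $\theta$ is ergodic with respect to $\mathbb P$, then $S(\omega)\neq\emptyset$ almost surely.
   Context: Let $(\Omega,\mathscr F,\mathbb P)$ be a probability space and $\theta:\Omega\to\Omega$ an invertible bimeasurable map preserving $\mathbb P$; $\theta_n=\theta^n$. Let $(X,d_X)$ be a locally compact separable complete metric space. A random homeomorphism is $\varphi:\Omega\times X\to X$ with $\varphi(\cdot,x)$ measurable and $\varphi(\omega,\cdot)$ a homeomorphism; iterates $\varphi^n(\omega,\cdot)=\varphi(\theta_{n-1}\omega,\cdot)\circ\cdots\circ\varphi(\omega,\cdot)$ ($n>0$), $\varphi^0=\mathrm{id}$, $\varphi^n(\omega,\cdot)=\varphi(\theta_n\omega,\cdot)^{-1}\circ\cdots\circ\varphi(\theta_{-1}\omega,\cdot)^{-1}$ ($n<0$). Random compact set: compact-valued $D$ with $\omega\mapsto\mathrm{dist}_X(x,D(\omega))$ measurable for each $x$. $\mathrm{Inv}A(\omega)=\{x\in A(\omega):\varphi^n(\omega,x)\in A(\theta_n\omega)\ \forall n\in\mathbb Z\}$. A random compact $N$ is a random isolating neighborhood if $\mathrm{Inv}N\subset\mathrm{int}N$; $S=\mathrm{Inv}N$ is then a random isolated invariant set. Exit set $N^-(\omega)=\{x\in N(\omega):\varphi(\omega,x)\notin\mathrm{int}N(\theta\omega)\}$. A random neighborhood of $A$ in $N$: random $W\subset N$ with $A(\omega)$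 in the relative interior of $W(\omega)$. A random filtration pair for $S$ is $(N,L)$ with $N$ a random isolating neighborhood, $S=\mathrm{Inv}N$, $L\subset N$ random compact, $N=\mathrm{cl}\,\mathrm{int}N$, $L=\mathrm{cl}\,\mathrm{int}L$, $\mathrm{cl}(N\setminus L)$ a random isolating neighborhood with $\mathrm{Inv}\,\mathrm{cl}(N\setminus L)=S$, $L$ a random neighborhood of $N^-$ in $N$, and $\varphi(\omega,L(\omega))\cap\mathrm{cl}(N(\theta\omega)\setminus L(\theta\omega))=\emptyset$. For $P=(N,L)$: $N_L(\omega)=N(\omega)/L(\omega)$ with base point $[L(\omega)]$ (an added isolated base point if $L(\omega)=\emptyset$; $\emptyset/\emptyset$ is the one-point space), $p$ the quotient map, and $\varphi_P(\omega,x)=[L(\theta\omega)]$ if $x=[L(\omega)]$ or $\varphi(\omega,x)\notin N(\theta\omega)$, else $p(\theta\omega,\varphi(\omega,x))$. Random maps between random pointed spaces are base-point preserving, continuous in the space variable, measurable in $\omega$; random homotopy: a map $H(t,\omega,x)$ continuous in $(t,x)$, measurable in $\omega$, joining two such maps. For random pointed spaces $C,D$ with self-maps $c(\omega,\cdot):C(\omega)\to C(\theta\omega)$, $d$, iterates $c^k(\omega,\cdot)=c(\theta_{k-1}\omega,\cdot)\circ\cdots\circ c(\omega,\cdot)$, the classes $[C,c]$, $[D,d]$ are random shift equivalent if there are measurable $n_1,n_2\ge0$ and random maps $r(\omega,\cdot):C(\omega)\to D(\theta_{n_1(\omega)}\omega)$, $s(\omega,\cdot):D(\omega)\to C(\theta_{n_2(\omega)}\omega)$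 with, up to random homotopy: $r(\theta\omega,c(\omega,\cdot))\simeq d^{n_1(\theta\omega)-n_1(\omega)}(\theta_{n_1(\omega)+1}\omega,d(\theta_{n_1(\omega)}\omega,r(\omega,\cdot)))$ if $n_1(\theta\omega)\ge n_1(\omega)$ and $d^{n_1(\omega)-n_1(\theta\omega)}(\theta_{n_1(\theta\omega)+1}\omega,r(\theta\omega,c(\omega,\cdot)))\simeq d(\theta_{n_1(\omega)}\omega,r(\omega,\cdot))$ otherwise; the same for $(s,d,c,n_2)$; $r(\theta_{n_2(\omega)}\omega,s(\omega,\cdot))\simeq d^{n_2(\omega)+n_1(\theta_{n_2(\omega)}\omega)}(\omega,\cdot)$ and $s(\theta_{n_1(\omega)}\omega,r(\omega,\cdot))\simeq c^{n_1(\omega)+n_2(\theta_{n_1(\omega)}\omega)}(\omega,\cdot)$. The random Conley index $h(S,\varphi)$ is the random shift equivalence class of the random homotopy class $[\varphi_P]$ on $N_L$ for a random filtration pair $P=(N,L)$ of $S$. $\underline 0$ denotes the random Conley index of random pointed spaces consisting of just one point (the base point) with the constant maps. *)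

From HB Require Import structures.
From mathcomp Require Import all_boot all_order all_algebra.
From mathcomp Require Import all_classical all_reals all_analysis measurable_realfun.
Set Implicit Arguments. Unset Strict Implicit. Unset Printing Implicit Defensive.
Import Order.TTheory GRing.Theory Num.Theory.
Import numFieldNormedType.Exports.
Local Open Scope classical_set_scope.
Local Open Scope ring_scope.

(* Points of the pointed quotient space N/L are encoded in option X:          *)
(*   None   = the base point [L] (an added isolated point if L is empty),     *)
(*   Some x = the class of x, for x in N \ L.                                 *)

Section Setting.
Context {R : realType} {d : measure_display} {Omega : measurableType d}.
Context {X : metricType R}.

Definition thetaN (theta : Omega -> Omega) (n : nat) (w : Omega) := iter n theta w.

Definition thetaZ (theta thetainv : Omega -> Omega) (n : int) (w : Omega) :=
  match n with
  | Posz k => iter k theta w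
  | Negz k => iter k.+1 thetainv w
  end.

Definition invertible_mp (P : probability Omega R) (theta thetainv : Omega -> Omega) :=
  [/\ cancel theta thetainv, cancel thetainv theta,
      measurable_fun setT theta, measurable_fun setT thetainv &
      forall A, measurable A -> P (theta @^-1` A) = P A].

Definition ergodic (P : probability Omega R) (theta : Omega -> Omega) :=
  forall A, measurable A -> theta @^-1` A = A -> P A = 0%E \/ P A = 1%E.

Definition complete_space (Y : metricType R) :=
  forall F : set_system Y, ProperFilter F -> cauchy F -> exists y : Y, F --> y.

Definition separable_space (Y : metricType R) :=
  exists D : set Y, countable D /\ dense D.

Definition random_homeo (phi psi : Omega -> X -> X) :=
  (forall x (U : set X), open U -> measurable [set w | U (phi w x)]) /\
  (forall w, [/\ cancel (phi w) (psi w), cancel (psi w) (phi w),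
                 continuous (phi w) & continuous (psi w)]).

Section Iterates.
Variables (theta thetainv : Omega -> Omega) (phi psi : Omega -> X -> X).

Fixpoint phiN (k : nat) (w : Omega) (x : X) : X :=
  match k with
  | 0 => x
  | k'.+1 => phi (iter k' theta w) (phiN k' w x)
  end.

Fixpoint phiB (k : nat) (w : Omega) (x : X) : X :=
  match k with
  | 0 => x
  | k'.+1 => psi (iter k'.+1 thetainv w) (phiB k' w x)
  end.

Definition phiZ (n : int) (w : Omega) (x : X) : X :=
  match n with
  | Posz k => phiN k w x
  | Negz k => phiB k.+1 w x
  end.

Definition Inv (A : Omega -> set X) (w : Omega) : set X :=
  [set x | A w x /\ forall n : int, A (thetaZ theta thetainv n w) (phiZ n w x)].

End Iterates.

Definition distX (x : X) (A : set X) : \bar R :=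
  ereal_inf [set (mdist x y)%:E | y in A].

Definition random_compact (D : Omega -> set X) :=
  (forall w, compact (D w)) /\
  (forall x, measurable_fun setT (fun w => distX x (D w))).

Section Isolation.
Variables (theta thetainv : Omega -> Omega) (phi psi : Omega -> X -> X).

Definition isolating_nbhd (N : Omega -> set X) :=
  random_compact N /\
  forall w, Inv theta thetainv phi psi N w `<=` interior (N w).

Definition isolated_invariant (S : Omega -> set X) :=
  exists N, isolating_nbhd N /\ forall w, S w = Inv theta thetainv phi psi N w.

Definition exit_set (N : Omega -> set X) (w : Omega) : set X :=
  [set x | N w x /\ ~ interior (N (theta w)) (phi w x)].

Definition rel_interior (W A : set X) : set X :=
  [set x | W x /\ exists U : set X, [/\ open U, U x & U `&` A `<=` W]].

Definition filtration_pair (S N L : Omega -> set X) :=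
  [/\ isolating_nbhd N,
      (forall w, S w = Inv theta thetainv phi psi N w),
      random_compact L,
      (forall w, L w `<=` N w) &
      (forall w, N w = closure (interior (N w)))] /\
  [/\ (forall w, L w = closure (interior (L w))),
      isolating_nbhd (fun w => closure (N w `\` L w)),
      (forall w, Inv theta thetainv phi psi (fun w => closure (N w `\` L w)) w = S w),
      (forall w, exit_set N w `<=` rel_interior (L w) (N w)) &
      (forall w, phi w @` L w `&` closure (N (theta w) `\` L (theta w)) = set0)].

End Isolation.

Definition Qs (N L : set X) : set (option X) :=
  [set q | q = None \/ exists x, [/\ q = Some x, N x & ~ L x]].

(* the quotient map N -> N/L (points outside N are also sent to the base point) *)
Definition qproj (N L : set X) (x : X) : option X :=
  if (x \in N) && (x \notin L) then Some x else None.

(* open sets of the quotient topology of N/L (N carrying the subspace topology) *)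
Definition qopen (N L : set X) (U : set (option X)) :=
  U `<=` Qs N L /\
  exists V : set X, open V /\ [set x | N x /\ U (qproj N L x)] = V `&` N.

Definition qcont (N1 L1 N2 L2 : set X) (f : option X -> option X) :=
  [/\ f None = None,
      (forall q, Qs N1 L1 q -> Qs N2 L2 (f q)) &
      (forall U, qopen N2 L2 U -> qopen N1 L1 (Qs N1 L1 `&` f @^-1` U))].

(* Borel measurability of an (option X)-valued function of w *)
Definition meas_opt (g : Omega -> option X) :=
  measurable [set w | g w = None] /\
  forall U : set X, open U -> measurable [set w | exists y, g w = Some y /\ U y].

Definition meas_nat (n : Omega -> nat) := forall k, measurable [set w | n w = k].

Definition random_map (N1 L1 N2 L2 : Omega -> set X) (tau : Omega -> Omega)
    (f : Omega -> option X -> option X) :=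
  (forall w, qcont (N1 w) (L1 w) (N2 (tau w)) (L2 (tau w)) (f w)) /\
  (forall x, meas_opt (fun w => f w (qproj (N1 w) (L1 w) x))).

Definition rhomotopic (P : probability Omega R) (N1 L1 N2 L2 : Omega -> set X)
    (tau : Omega -> Omega) (f g : Omega -> option X -> option X) :=
  exists H : R -> Omega -> option X -> option X,
  [/\ (forall t w, 0 <= t <= 1 ->
         H t w None = None /\
         forall q, Qs (N1 w) (L1 w) q -> Qs (N2 (tau w)) (L2 (tau w)) (H t w q)),
      (* joint continuity in (t, q) on [0,1] x N1/L1 *)
      (forall w U, qopen (N2 (tau w)) (L2 (tau w)) U ->
         forall t q, 0 <= t <= 1 -> Qs (N1 w) (L1 w) q -> U (H t w q) ->
         exists e : R, 0 < e /\ exists V, [/\ qopen (N1 w) (L1 w) V, V q &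
           forall t' q', 0 <= t' <= 1 -> `|t' - t| < e -> V q' -> U (H t' w q')]),
      (forall t x, 0 <= t <= 1 -> meas_opt (fun w => H t w (qproj (N1 w) (L1 w) x))) &
      {ae P, forall w, forall q, Qs (N1 w) (L1 w) q ->
                H 0 w q = f w q /\ H 1 w q = g w q}].

Section ShiftEquivalence.
Variables (P : probability Omega R) (theta : Omega -> Omega).

Fixpoint citer (c : Omega -> option X -> option X) (k : nat) (w : Omega) (q : option X)
  : option X :=
  match k with
  | 0 => q
  | k'.+1 => c (iter k' theta w) (citer c k' w q)
  end.

Let th := thetaN theta.

Definition shift_compat (N1 L1 N2 L2 : Omega -> set X) (c d r : Omega -> option X -> option X)
    (n1 : Omega -> nat) :=
  rhomotopic P N1 L1 N2 L2
    (fun w => if (n1 w <= n1 (theta w))%N then th (n1 (theta w)).+1 w else th (n1 w).+1 w)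
    (fun w q => if (n1 w <= n1 (theta w))%N then r (theta w) (c w q)
                else citer d (n1 w - n1 (theta w))%N (th (n1 (theta w)).+1 w)
                       (r (theta w) (c w q)))
    (fun w q => if (n1 w <= n1 (theta w))%N then
                  citer d (n1 (theta w) - n1 w)%N (th (n1 w).+1 w)
                    (d (th (n1 w) w) (r w q))
                else d (th (n1 w) w) (r w q)).

Definition shift_equiv (N1 L1 : Omega -> set X) (c : Omega -> option X -> option X)
    (N2 L2 : Omega -> set X) (d : Omega -> option X -> option X) :=
  exists (n1 n2 : Omega -> nat) (r s : Omega -> option X -> option X),
  [/\ meas_nat n1, meas_nat n2,
      random_map N1 L1 N2 L2 (fun w => th (n1 w) w) r &
      random_map N2 L2 N1 L1 (fun w => th (n2 w) w) s] /\
  [/\ shift_compat N1 L1 N2 L2 c d r n1,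
      shift_compat N2 L2 N1 L1 d c s n2,
      rhomotopic P N2 L2 N2 L2 (fun w => th (n2 w + n1 (th (n2 w) w))%N w)
        (fun w q => r (th (n2 w) w) (s w q))
        (fun w q => citer d (n2 w + n1 (th (n2 w) w))%N w q) &
      rhomotopic P N1 L1 N1 L1 (fun w => th (n1 w + n2 (th (n1 w) w))%N w)
        (fun w q => s (th (n1 w) w) (r w q))
        (fun w q => citer c (n1 w + n2 (th (n1 w) w))%N w q)].

End ShiftEquivalence.

Definition phiP (theta : Omega -> Omega) (phi : Omega -> X -> X) (N L : Omega -> set X)
    (w : Omega) (q : option X) : option X :=
  match q with
  | None => None
  | Some x => if phi w x \in N (theta w) then qproj (N (theta w)) (L (theta w)) (phi w x)
              else None
  end.

(* the trivial index 0: one-point spaces (= empty/empty) with constant maps *)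
Definition empty_rs : Omega -> set X := fun _ => set0.
Definition const_base : Omega -> option X -> option X := fun _ _ => None.

Definition nontrivial_index (P : probability Omega R) (theta thetainv : Omega -> Omega)
    (phi psi : Omega -> X -> X) (S : Omega -> set X) :=
  exists N L : Omega -> set X,
    filtration_pair theta thetainv phi psi S N L /\
    ~ shift_equiv P theta N L (phiP theta phi N L) empty_rs empty_rs const_base.

End Setting.

From Pilot Require Import Defs.
From HB Require Import structures.
From mathcomp Require Import all_boot all_order all_algebra.
From mathcomp Require Import all_classical all_reals all_analysis measurable_realfun.
From mathcomp Require Import lra.
Import Order.TTheory GRing.Theory Num.Theory.
Local Open Scope classical_set_scope.
Local Open Scope ring_scope.
Set Implicit Arguments. Unset Strict Implicit. Unset Printing Implicit Defensive.

(* Let G_n be the set of w from which some point of N(w) stays in N for n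
   forward steps, and E the intersection of the G_n.  Since E is sent into
   itself by theta, ergodicity gives P(E) = 0 or P(E) = 1.  If P(E) = 0, the
   first exit time n1(w) from the G_n is finite almost surely and phi_P^n1
   is constant at the base point, so the index is shift equivalent to 0 (with
   n2 = 0 and constant connecting maps).  If P(E) = 1, almost every w has all
   its backward translates theta_{-n} w in E, so for every n some orbit
   segment of length 2n runs inside N and passes through N(w) at time n; by
   compactness of N(w) a cluster point of these middle points lies in
   Inv N (w) = S(w). *)

Section MetricFacts.
Context {R : realType} {X : metricType R}.
Implicit Types (x y : X) (A : set X).

Lemma nbhs_mdist_ltP x A :
  nbhs x A <-> exists2 e : R, 0 < e & forall y, mdist x y < e -> A y.
Proof.
rewrite nbhs_ballP; split => [[e /= e0 H]|[e e0 H]].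
  by exists e => // y hy; apply: H; rewrite ballEmdist.
by exists e => // y; rewrite ballEmdist; apply: H.
Qed.

Lemma open_mball (c : X) (r : R) : open (ball c r).
Proof.
rewrite openE => p; rewrite ballEmdist /= => cp.
apply/nbhs_mdist_ltP; exists (r - mdist c p); first by rewrite subr_gt0.
move=> y py /=.
by rewrite (le_lt_trans (metric_triangle c p y)) // -ltrBrDl.
Qed.

Lemma dense_mdist_lt D : dense D -> forall x (e : R), 0 < e ->
  exists2 y, D y & mdist x y < e.
Proof.
move=> dD x e e0; have [|y [xy Dy]] := dD (ball x e) _ (open_mball x e).
  by exists x; rewrite ballEmdist /= mdistxx.
by exists y => //; rewrite ballEmdist in xy.
Qed.

Lemma closed_mdist_lt C x : closed C ->
  (forall e : R, 0 < e -> exists2 y, C y & mdist x y < e) -> C x.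
Proof.
move=> cC H; apply: cC => B /nbhs_mdist_ltP[e e0 HB].
by have [y Cy xy] := H e e0; exists y; split => //; apply: HB.
Qed.

Lemma continuous_mdist_lt (f : X -> X) x (e : R) : {for x, continuous f} ->
  0 < e -> exists2 h : R, 0 < h & forall y, mdist x y < h -> mdist (f x) (f y) < e.
Proof.
move=> cf e0; have /cf /nbhs_mdist_ltP[h h0 H] := nbhsx_ballx (f x) e e0.
by exists h => // y /H; rewrite /= ballEmdist.
Qed.

Lemma continuous_mdist_lt_finite (f : nat -> X -> X) n x (e : R) :
  (forall k, continuous (f k)) -> 0 < e -> exists2 h : R, 0 < h &
    forall k y, (k <= n)%N -> mdist x y < h -> mdist (f k x) (f k y) < e.
Proof.
move=> cf e0.
have : \forall y \near x, forall i : 'I_n.+1, mdist (f i x) (f i y) < e.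
  apply: (@filter_forall X 'I_n.+1 (fun i y => mdist (f i x) (f i y) < e)) => i.
  by have [h h0 H] := continuous_mdist_lt (cf i x) e0; apply/nbhs_mdist_ltP; exists h.
move=> /nbhs_mdist_ltP[h h0 H]; exists h => // k y kn /H.
by move=> /(_ (Ordinal (kn : (k < n.+1)%N))).
Qed.

Lemma compact_cluster_seq A (z : nat -> X) : compact A -> (forall m, A (z m)) ->
  exists2 x, A x &
    forall (e : R) M, 0 < e -> exists m, (M <= m)%N /\ mdist x (z m) < e.
Proof.
move=> cA Az.
have /cA[x [Ax clx]] : (z @ \oo) A by apply: filterS (nbhs_infty_ge 0) => m _.
exists x => // e M e0.
have zM : (z @ \oo) (z @` [set m | (M <= m)%N]).
  by apply: filterS (nbhs_infty_ge M) => m Mm; exists m.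
have [_ [[m Mm <-] xzm]] := clx _ _ zM (nbhsx_ballx x _ e0).
by exists m; split => //; rewrite ballEmdist in xzm.
Qed.

Lemma compact_constraints_solution (I : Type) (A : set X) (C : I -> set X)
    (F : I -> X -> X) (z : nat -> X) :
  compact A -> (forall i, closed (C i)) -> (forall i, continuous (F i)) ->
  (forall m, A (z m)) ->
  (forall i, exists M, forall m, (M <= m)%N -> C i (F i (z m))) ->
  exists2 x, A x & forall i, C i (F i x).
Proof.
move=> cA cC cF Az ev; have [x Ax clx] := compact_cluster_seq cA Az.
exists x => // i; have [M HM] := ev i.
apply: closed_mdist_lt (cC i) _ => e e0.
have [h h0 Hh] := continuous_mdist_lt (cF i x) e0.
have [m [Mm xzm]] := clx h M h0.
by exists (F i (z m)); [apply: HM | apply: Hh].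
Qed.

Lemma natSinv_lt_eventually (e : R) : 0 < e ->
  exists M, forall m, (M <= m)%N -> m.+1%:R^-1 < e.
Proof. by move=> e0; have [M _ HM] := near_infty_natSinv_lt (PosNum e0); exists M. Qed.

Lemma compact_approx_solution (B : nat -> set X) (f : nat -> X -> X) n :
  compact (B 0) -> (forall k, closed (B k)) -> (forall k, continuous (f k)) ->
  f 0 =1 id ->
  (forall e : R, 0 < e -> exists y, forall k, (k <= n)%N ->
     exists2 p, B k p & mdist (f k y) p < e) ->
  exists x, forall k, (k <= n)%N -> B k (f k x).
Proof.
move=> cB0 clB cf f0 approx.
have /choice[y hy] : forall m : nat, exists y, forall k, (k <= n)%N ->
    exists2 p, B k p & mdist (f k y) p < m.+1%:R^-1.
  by move=> m; apply: approx; rewrite invr_gt0.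
have /choice[z hz] : forall m, exists z, B 0 z /\ mdist (y m) z < m.+1%:R^-1.
  by move=> m; have [p B0p] := hy m 0%N (leq0n n); rewrite f0 => ?; exists p.
have [x B0x clx] := compact_cluster_seq cB0 (fun m => (hz m).1).
exists x => k kn; apply: closed_mdist_lt (clB k) _ => e e0.
have [h h0 cfk] := continuous_mdist_lt (cf k x) (divr_gt0 e0 (ltr0Sn R 1)).
have [M HM] : exists M, forall m, (M <= m)%N -> m.+1%:R^-1 < Num.min (h / 2) (e / 2).
  by apply: natSinv_lt_eventually; rewrite lt_min !divr_gt0.
have [m [Mm xzm]] := clx (h / 2) M (divr_gt0 h0 (ltr0Sn R 1)).
have [p Bkp fyp] := hy m k kn; exists p => //.
have yzm := (hz m).2.
have := HM m Mm; rewrite lt_min => /andP[mh me].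
move: (m.+1%:R^-1) fyp yzm mh me => em fyp yzm mh me.
have xym : mdist x (y m) < h.
  rewrite (le_lt_trans (metric_triangle x (z m) (y m))) // (metric_sym (z m)); lra.
have fxy := cfk _ xym.
rewrite (le_lt_trans (metric_triangle (f k x) (f k (y m)) p)) //; lra.
Qed.

End MetricFacts.

Section MeasurableSets.
Context {d : measure_display} {Omega : measurableType d}.

Lemma measurable_set_cst (b : Prop) : measurable [set _ : Omega | b].
Proof.
have [hb|hb] := pselect b.
  by rewrite (_ : [set _ | b] = setT) //; apply/seteqP; split.
by rewrite (_ : [set _ | b] = set0) //; apply/seteqP; split.
Qed.

Lemma bigcup_countable_measurable (I : Type) (A : set I) (F : I -> set Omega) :
  countable A -> (forall i, A i -> measurable (F i)) ->
  measurable (\bigcup_(i in A) F i).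
Proof.
move=> /countable_injP[f injf] mF.
have -> : \bigcup_(i in A) F i =
    \bigcup_n [set w | exists i, [/\ A i, f i = n & F i w]].
  apply/seteqP; split => [w [i Ai Fiw]|w [_ _ [i [Ai _ Fiw]]]]; last by exists i.
  by exists (f i) => //; exists i.
apply: bigcup_measurable => n _.
have [[i [Ai fi]]|nof] := pselect (exists i, A i /\ f i = n).
  rewrite (_ : [set w | _] = F i); first exact: mF.
  apply/seteqP; split => [w [j [Aj fj Fjw]]|w Fiw]; last by exists i.
  by rewrite -(injf j i) ?inE // fj fi.
rewrite (_ : [set w | _] = set0) //; apply/seteqP; split => // w [i [Ai fi _]].
by apply: nof; exists i.
Qed.

Lemma bigcap_countable_measurable (I : Type) (A : set I) (F : I -> set Omega) :
  countable A -> (forall i, A i -> measurable (F i)) ->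
  measurable (\bigcap_(i in A) F i).
Proof.
move=> cA mF; rewrite -[X in measurable X]setCK setC_bigcap; apply: measurableC.
by apply: bigcup_countable_measurable => // i Ai; apply/measurableC/mF.
Qed.

Lemma measurable_preimage d' (T : measurableType d') (f : Omega -> T) (A : set T) :
  measurable_fun setT f -> measurable A -> measurable (f @^-1` A).
Proof. by move=> mf mA; rewrite -[_ @^-1` _]setTI; apply: mf. Qed.

Lemma measurable_fun_iter (f : Omega -> Omega) k :
  measurable_fun setT f -> measurable_fun setT (iter k f).
Proof.
move=> mf; elim: k => [|k IH]; first exact: measurable_id.
exact: (measurableT_comp mf IH).
Qed.

End MeasurableSets.

Section BallMeasurability.
Context {R : realType} {d : measure_display} {Omega : measurableType d}.
Context {X : metricType R}.
Variable D : set X.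
Hypotheses (cD : countable D) (dD : dense D).

(* for separable X, this is Borel measurability *)
Definition ball_measurable (u : Omega -> X) :=
  forall (c : X) (r : R), measurable [set w | mdist c (u w) < r].

Lemma ball_measurable_comp (g : Omega -> X -> X) (v : Omega -> X) :
  (forall w, continuous (g w)) -> (forall x, ball_measurable (fun w => g w x)) ->
  ball_measurable v -> ball_measurable (fun w => g w (v w)).
Proof.
move=> cg mg mv c r.
have -> : [set w | mdist c (g w (v w)) < r] = \bigcup_j \bigcup_m
    \bigcap_(x in D) ([set w | ~ mdist x (v w) < m.+1%:R^-1] `|`
                     [set w | mdist c (g w x) < r - j.+1%:R^-1]).
  apply/seteqP; split => w /=.
  - move=> cgv.
    have r0 : 0 < (r - mdist c (g w (v w))) / 2 by rewrite divr_gt0 // subr_gt0.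
    have [j /(_ j (leqnn j)) Hj] := natSinv_lt_eventually r0.
    have j0 : 0 < j.+1%:R^-1 :> R by rewrite invr_gt0.
    have [h h0 Hh] := continuous_mdist_lt (cg w (v w)) j0.
    have [m /(_ m (leqnn m)) Hm] := natSinv_lt_eventually h0.
    exists j => //; exists m => // x Dx.
    have [vx|] := pselect (mdist x (v w) < m.+1%:R^-1); last by left.
    right => /=; have := Hh x; rewrite metric_sym => /(_ (lt_trans vx Hm)) gvx.
    move: (j.+1%:R^-1) Hj gvx => ej Hj gvx.
    rewrite (le_lt_trans (metric_triangle c (g w (v w)) (g w x))) //; lra.
  - move=> [j _ [m _ Hjm]].
    have j0 : 0 < j.+1%:R^-1 :> R by rewrite invr_gt0.
    have [h h0 Hh] := continuous_mdist_lt (cg w (v w)) j0.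
    have hm : 0 < Num.min h m.+1%:R^-1 by rewrite lt_min h0 invr_gt0 ltr0Sn.
    have [x Dx] := dense_mdist_lt dD (v w) hm; rewrite lt_min => /andP[vxh vxm].
    case: (Hjm x Dx) => [nvx|cgx]; first by exfalso; apply: nvx; rewrite metric_sym.
    have gvx := Hh x vxh; move: (j.+1%:R^-1) cgx gvx => ej /= cgx gvx.
    rewrite (le_lt_trans (metric_triangle c (g w x) (g w (v w)))) //.
    rewrite (metric_sym (g w x)); lra.
apply: bigcup_measurable => j _; apply: bigcup_measurable => m _.
apply: bigcap_countable_measurable => // x _; apply: measurableU.
  exact: (measurableC (mv _ _)).
exact: mg.
Qed.

Lemma distX_lt (x : X) (A : set X) (r : R) :
  (distX x A < r%:E)%E <-> exists2 y, A y & mdist x y < r.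
Proof.
split; first by move=> /ereal_inf_ltP[_ [y Ay <-]]; rewrite lte_fin; exists y.
by move=> [y Ay xy]; apply/ereal_inf_ltP; exists (mdist x y)%:E; [exists y|].
Qed.

Lemma distX_comp_measurable (u : Omega -> X) (M : Omega -> set X) (r : R) :
  (forall x, measurable_fun setT (fun w => distX x (M w))) -> ball_measurable u ->
  measurable [set w | (distX (u w) (M w) < r%:E)%E].
Proof.
move=> mM mu.
have -> : [set w | (distX (u w) (M w) < r%:E)%E] = \bigcup_m \bigcup_(z in D)
    ([set w | mdist z (u w) < m.+1%:R^-1] `&`
     [set w | (distX z (M w) < (r - m.+1%:R^-1)%:E)%E]).
  apply/seteqP; split => w /=.
  - move=> /distX_lt[y My uy].
    have r0 : 0 < (r - mdist (u w) y) / 2 by rewrite divr_gt0 // subr_gt0.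
    have [m /(_ m (leqnn m)) Hm] := natSinv_lt_eventually r0.
    have m0 : 0 < m.+1%:R^-1 :> R by rewrite invr_gt0.
    have [z Dz uz] := dense_mdist_lt dD (u w) m0.
    exists m => //; exists z => //; split; first by rewrite /= metric_sym.
    apply/distX_lt; exists y => //; move: (m.+1%:R^-1) Hm uz => em Hm uz.
    rewrite (le_lt_trans (metric_triangle z (u w) y)) // metric_sym; lra.
  - move=> [m _ [z Dz [/= zu /distX_lt[y My zy]]]].
    apply/distX_lt; exists y => //; move: (m.+1%:R^-1) zu zy => em zu zy.
    rewrite (le_lt_trans (metric_triangle (u w) z y)) // metric_sym; lra.
apply: bigcup_measurable => m _; apply: bigcup_countable_measurable => // z _.
apply: measurableI; first exact: mu.
rewrite (_ : [set w | _] = (fun w => distX z (M w)) @^-1` `]-oo, (r - m.+1%:R^-1)%:E[).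
  by rewrite -[_ @^-1` _]setTI; apply: mM => //; apply: emeasurable_itv.
by apply/seteqP; split => w /=; rewrite in_itv.
Qed.

End BallMeasurability.

Section Ergodic.
Context {R : realType} {d : measure_display} {Omega : measurableType d}.
Variable P : probability Omega R.

Definition preserves (f : Omega -> Omega) :=
  forall A, measurable A -> P (f @^-1` A) = P A.

Lemma preserves_cancel (f g : Omega -> Omega) : cancel f g ->
  measurable_fun setT g -> preserves f -> preserves g.
Proof.
move=> fK mg pf A mA; rewrite -pf; last exact: measurable_preimage.
by congr (P _); apply/seteqP; split => w /=; rewrite fK.
Qed.

Variable theta : Omega -> Omega.
Hypotheses (mtheta : measurable_fun setT theta) (ptheta : preserves theta).

Lemma preserves_iter k : preserves (iter k theta).
Proof.
elim: k => [|k IH] A mA //=.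
by rewrite -[_ @^-1` _]/(iter k theta @^-1` (theta @^-1` A)) IH ?ptheta //;
  apply: measurable_preimage.
Qed.

Lemma ae_forall_iter E : measurable E -> P (~` E) = 0%E ->
  {ae P, forall w n, E (iter n theta w)}.
Proof.
move=> mE PE; apply: (negligibleS (A := \bigcup_n (iter n theta @^-1` ~` E))).
  by move=> w /= /existsNP[n nE]; exists n.
apply: negligible_bigcup => n; apply/negligibleP.
  by apply: measurable_preimage (measurableC mE); apply: measurable_fun_iter.
by rewrite /= preserves_iter //; apply: measurableC.
Qed.

Section Subinvariant.
Variable E : set Omega.
Hypotheses (mE : measurable E) (Einv : E `<=` theta @^-1` E).

Let measurable_preimage_iter k : measurable (iter k theta @^-1` E).
Proof. exact: measurable_preimage (measurable_fun_iter k mtheta) mE. Qed.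

Lemma negligible_preimage_iterD k : P.-negligible (iter k theta @^-1` E `\` E).
Proof.
apply/negligibleP; first exact: measurableD.
have P_lty A : measurable A -> (P A < +oo)%E.
  by move=> mA; rewrite (le_lt_trans (probability_le1 _ mA)) ?ltry.
rewrite measureD ?P_lty //.
change (P (iter k theta @^-1` E) - P (iter k theta @^-1` E `&` E) = 0)%E.
have -> : iter k theta @^-1` E `&` E = E.
  apply/seteqP; split => [w []//|w Ew]; split => //.
  by elim: k => // k IH; apply: Einv.
by rewrite preserves_iter // subee // ge0_fin_numE ?measure_ge0 ?P_lty.
Qed.

(* The union of the preimages of E under the iterates of theta is invariant
   and differs from E by a null set. *)
Lemma ergodic_subinvariant : ergodic P theta -> P E = 0%E \/ P (~` E) = 0%E.
Proof.
move=> erg; pose F := \bigcup_k (iter k theta @^-1` E).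
have mF : measurable F by apply: bigcup_measurable => k _.
have Finv : theta @^-1` F = F.
  apply/seteqP; split => [w [k _ /= Ek]|w [[|k] _ /= Ek]].
  - by exists k.+1 => //=; rewrite -iterS iterSr.
  - by exists 0%N => //=; apply: Einv.
  - by exists k => //=; rewrite -iterSr iterS.
case: (erg F mF Finv) => PF; [left|right].
  by apply/eqP; rewrite -measure_le0 -PF le_measure ?inE //; exists 0%N.
apply: (measure_negligible (measurableC mE)).
apply: (negligibleS (A := ~` F `|` \bigcup_k (iter k theta @^-1` E `\` E))).
  by move=> w nEw; have [[k _ Ek]|] := pselect (F w); [right; exists k|left].
apply: negligibleU; last exact: negligible_bigcup negligible_preimage_iterD.
apply/negligibleP; first exact: measurableC.
by apply: (eq_trans (probability_setC P mF)); rewrite PF subee.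
Qed.

End Subinvariant.

End Ergodic.

Section Survival.
Context {R : realType} {d : measure_display} {Omega : measurableType d}.
Context {X : metricType R}.
Variables (theta : Omega -> Omega) (phi : Omega -> X -> X) (N : Omega -> set X).

Local Notation phiN := (phiN theta phi).

Lemma phiN_add m n w x : phiN (m + n) w x = phiN n (iter m theta w) (phiN m w x).
Proof. by elim: n => [|n IH]; rewrite ?addn0 // addnS /= IH addnC iterD. Qed.

Lemma continuous_phiN k w : (forall w, continuous (phi w)) -> continuous (phiN k w).
Proof.
move=> cphi; elim: k => [|k IH] x /=; first exact: cvg_id.
exact: continuous_comp (IH x) (cphi _ _).
Qed.

Definition survivors n w :=
  [set x | forall k, (k <= n)%N -> N (iter k theta w) (phiN k w x)].

Definition survival n := [set w | survivors n w !=set0].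

Lemma survival_le m n : (m <= n)%N -> survival n `<=` survival m.
Proof. by move=> mn w [x Kx]; exists x => k km; apply: Kx; apply: leq_trans mn. Qed.

Lemma survivalS n w : survival n.+1 w -> survival n (theta w).
Proof.
move=> [x Kx]; exists (phi w x) => k kn.
by have := Kx k.+1 kn; rewrite -addn1 addnC phiN_add /= -iterSr.
Qed.

Variable D : set X.
Hypotheses (cD : countable D) (dD : dense D) (mtheta : measurable_fun setT theta).
Hypotheses (cphi : forall w, continuous (phi w))
  (mphi : forall x (U : set X), open U -> measurable [set w | U (phi w x)]).
Hypotheses (cN : forall w, compact (N w))
  (mN : forall x, measurable_fun setT (fun w => distX x (N w))).

Lemma ball_measurable_phiN k x : ball_measurable (fun w => phiN k w x).
Proof.
elim: k => [|k IH] /=; first by move=> c r; apply: measurable_set_cst.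
apply: (ball_measurable_comp cD dD (g := fun w => phi (iter k theta w))) => // y c r.
rewrite (_ : [set w | _] = iter k theta @^-1` [set w | ball c r (phi w y)]).
  exact: measurable_preimage (measurable_fun_iter k mtheta) (@mphi y _ (open_mball c r)).
by apply/seteqP; split => w; rewrite /= ballEmdist.
Qed.

Lemma survival_dense n : survival n = \bigcap_m \bigcup_(y in D)
  \bigcap_(k in [set k | (k <= n)%N])
    [set w | (distX (phiN k w y) (N (iter k theta w)) < m.+1%:R^-1%:E)%E].
Proof.
apply/seteqP; split => w.
- move=> [x Kx] m _.
  have m0 : 0 < m.+1%:R^-1 :> R by rewrite invr_gt0.
  have [h h0 Hh] := continuous_mdist_lt_finite n x (fun k => @continuous_phiN k w cphi) m0.
  have [y Dy xy] := dense_mdist_lt dD x h0.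
  exists y => // k /= kn; apply/distX_lt; exists (phiN k w x); first exact: Kx.
  by rewrite metric_sym; apply: Hh.
- move=> Hw.
  have [k|k|//|e e0|x Kx] := @compact_approx_solution R X
    (fun k => N (iter k theta w)) (fun k => phiN k w) n (@cN w).
  + by apply: compact_closed (@cN _); apply: metric_hausdorff.
  + exact: continuous_phiN.
  + have [m /(_ m (leqnn m)) me] := natSinv_lt_eventually e0.
    have [y Dy Hy] := Hw m I; exists y => k kn.
    by have /distX_lt[p Np fp] := Hy k kn; exists p => //; apply: lt_trans me.
  + by exists x.
Qed.

Lemma survival_measurable n : measurable (survival n).
Proof.
rewrite survival_dense; apply: bigcap_measurableType => m _.
apply: bigcup_countable_measurable => // y _; apply: bigcap_measurableType => k _.
apply: (distX_comp_measurable cD dD (M := fun w => N (iter k theta w))).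
  by move=> x; apply: measurableT_comp (@mN x) (measurable_fun_iter k mtheta).
exact: ball_measurable_phiN.
Qed.

End Survival.

Section ExitTime.
Context {d : measure_display} {Omega : measurableType d}.
Variable G : nat -> set Omega.

Definition exit_time (w : Omega) : nat :=
  if pselect (exists n, ~~ `[< G n w >]) is left h then ex_minn h else 0.

Lemma exit_timeP w : (exists n, ~ G n w) ->
  ~ G (exit_time w) w /\ forall n, ~ G n w -> (exit_time w <= n)%N.
Proof.
move=> [n0 Gn0]; rewrite /exit_time; case: pselect => [h|]; last first.
  by case; exists n0; apply/negP => /asboolP.
case: ex_minnP => m /negP Gm minm; split; first by move=> /asboolP.
by move=> n Gn; apply: minm; apply/negP => /asboolP.
Qed.

Lemma exit_time_stay w : (forall n, G n w) -> exit_time w = 0.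
Proof.
move=> Gw; rewrite /exit_time; case: pselect => // -[n Gn]; exfalso.
by move/negP: Gn; apply; apply/asboolP.
Qed.

Lemma meas_nat_exit_time : (forall m n, (m <= n)%N -> G n `<=` G m) ->
  (forall n, measurable (G n)) -> meas_nat exit_time.
Proof.
move=> Gle mG [|k].
  have -> : [set w | exit_time w = 0] = ~` G 0 `|` \bigcap_n G n.
    apply/seteqP; split => w.
      move=> w0; have [Gw|/existsNP leave] := pselect (forall n, G n w); first by right.
      by left; have [] := exit_timeP leave; rewrite w0.
    case=> [G0|Gw]; last by apply: exit_time_stay => n; apply: Gw.
    by apply/eqP; rewrite -leqn0; apply: (exit_timeP (ex_intro _ 0%N G0)).2.
  by apply: measurableU; [apply: measurableC | apply: bigcap_measurableType].
have -> : [set w | exit_time w = k.+1] = G k `\` G k.+1.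
  apply/seteqP; split => w.
    move=> wk; have [Gw|/existsNP leave] := pselect (forall n, G n w).
      by move: wk; rewrite /= (exit_time_stay Gw).
    have [] := exit_timeP leave; rewrite wk => Gk1 minw; split => //.
    by apply: contrapT => /minw; rewrite ltnn.
  move=> [Gk Gk1]; have [Gw minw] := exit_timeP (ex_intro _ k.+1 Gk1).
  apply/eqP; rewrite eqn_leq minw //= ltnNge; apply/negP => /Gle /(_ w Gk).
  exact: Gw.
exact: measurableD.
Qed.

End ExitTime.

Section TrivialIndex.
Context {R : realType} {d : measure_display} {Omega : measurableType d}.
Context {X : metricType R}.
Variable P : probability Omega R.

Lemma Qs_qproj (A B : set X) x : Qs A B (qproj A B x).
Proof.
rewrite /qproj; case: ifP => [/andP[/set_mem Ax /negP Bx]|_]; last by left.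
by right; exists x; split => // /mem_set.
Qed.

Lemma qopen_cst (A B : set X) (b : Prop) : qopen A B (Qs A B `&` [set _ | b]).
Proof.
split; first by move=> q [].
have [hb|hb] := pselect b; [exists setT; split; first exact: openT
                           |exists set0; split; first exact: open0].
  by apply/seteqP; split => [x [] //|x [_ Ax]]; split => //; split => //; apply: Qs_qproj.
by apply/seteqP; split => [x [_ []]|x []].
Qed.

Lemma qopen_Qs (A B : set X) : qopen A B (Qs A B).
Proof. by rewrite -[Qs A B]setIT -[setT]/[set _ | True]; apply: qopen_cst. Qed.

Lemma meas_opt_None : meas_opt (fun _ : Omega => @None X).
Proof. by split => [|U _]; apply: measurable_set_cst. Qed.

Lemma random_map_const_base (N1 L1 N2 L2 : Omega -> set X) tau :
  random_map N1 L1 N2 L2 tau (@const_base R d Omega X).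
Proof.
split => [w|x]; last exact: meas_opt_None.
by split => // [q _|U _]; [left|apply: (qopen_cst _ _ (U None))].
Qed.

Lemma rhomotopic_None (N1 L1 N2 L2 : Omega -> set X) tau f g :
  {ae P, forall w q, Qs (N1 w) (L1 w) q -> f w q = None /\ g w q = None} ->
  rhomotopic P N1 L1 N2 L2 tau f g.
Proof.
move=> fg0; exists (fun _ _ _ => None); split.
- by move=> t w _; split => // q _; left.
- move=> w U _ t q _ Qq UNone; exists 1; split => //.
  by exists (Qs (N1 w) (L1 w)); split => //; apply: qopen_Qs.
- by move=> t x _; apply: meas_opt_None.
- by apply: filterS fg0 => w fgw q /fgw[-> ->].
Qed.

Lemma citer_const_base theta k w :
  citer theta (@const_base R d Omega X) k w None = None.
Proof. by case: k. Qed.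

Variables (theta : Omega -> Omega) (phi : Omega -> X -> X) (N L : Omega -> set X).

Local Notation c := (phiP theta phi N L).
Local Notation G := (survival theta phi N).

Lemma citer_phiP_Some k w q y : citer theta c k w q = Some y -> Qs (N w) (L w) q ->
  exists x, [/\ q = Some x, survivors theta phi N k w x & y = phiN theta phi k w x].
Proof.
elim: k y => [|k IH] y /=.
  move=> -> [//|[x [[->] Nx _]]]; exists x; split => //.
  by move=> j; rewrite leqn0 => /eqP ->.
case ck: (citer theta c k w q) => [y'|] //= cy Qq.
have [x [qx Kx y'x]] := IH y' ck Qq.
move: cy; case: ifP => // /set_mem Nphi; rewrite /qproj; case: ifP => // _ [<-].
exists x; split => //; last by rewrite y'x.
move=> j; rewrite leq_eqVlt ltnS => /orP[/eqP -> /=|jk]; last exact: Kx.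
by rewrite -y'x.
Qed.

Lemma citer_phiP_None k w q : ~ G k w -> Qs (N w) (L w) q -> citer theta c k w q = None.
Proof.
move=> Gk Qq; case ck: (citer theta c k w q) => [y|] //.
by have [x [_ Kx _]] := citer_phiP_Some ck Qq; case: Gk; exists x.
Qed.

Lemma shift_equiv_trivial : (forall n, measurable (G n)) ->
  P.-negligible (\bigcap_n G n) ->
  shift_equiv P theta N L c empty_rs empty_rs (@const_base R d Omega X).
Proof.
move=> mG Enull.
exists (exit_time G), (fun _ => 0%N), (@const_base R d Omega X), (@const_base R d Omega X).
split; split.
- by apply: meas_nat_exit_time => // m n; apply: survival_le.
- by move=> k; apply: measurable_set_cst.
- exact: random_map_const_base.
- exact: random_map_const_base.
- apply: rhomotopic_None; apply: aeW => w q _.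
  by case: ifP => _ /=; rewrite ?citer_const_base.
- by apply: rhomotopic_None; apply: aeW.
- apply: rhomotopic_None; apply: aeW => w q [->|[x [_ []]]] //.
  by rewrite citer_const_base.
- apply: rhomotopic_None; apply: (negligibleS _ Enull) => w /= fgw n _.
  apply: contrapT => Gn; apply: fgw => q Qq; split => //.
  by rewrite addn0; apply: citer_phiP_None => //; apply: (exit_timeP (ex_intro _ n Gn)).1.
Qed.

End TrivialIndex.

Section BackwardOrbits.
Context {R : realType} {d : measure_display} {Omega : measurableType d}.
Context {X : metricType R}.
Variables (theta thetainv : Omega -> Omega) (phi psi : Omega -> X -> X).
Variable N : Omega -> set X.
Hypotheses (thetaK : cancel theta thetainv) (thetainvK : cancel thetainv theta).
Hypotheses (phiK : forall w, cancel (phi w) (psi w))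
  (cphi : forall w, continuous (phi w)) (cpsi : forall w, continuous (psi w)).

Lemma iter_thetainvK n w : iter n theta (iter n thetainv w) = w.
Proof. by elim: n => //= n IH; rewrite -iterS iterSr thetainvK IH. Qed.

Lemma iter_thetainv_theta a m w : iter a thetainv (iter (m + a) theta w) = iter m theta w.
Proof. by elim: a => [|a IH]; rewrite ?addn0 // addnS iterSr /= thetaK IH. Qed.

Lemma phiB_phiN a m w x :
  phiB thetainv psi a (iter (m + a) theta w) (phiN theta phi (m + a) w x) =
  phiN theta phi m w x.
Proof.
elim: a m => [|a IH] m; first by rewrite addn0.
by rewrite /= -addSnnS IH iter_thetainv_theta /= thetaK phiK.
Qed.

Lemma continuous_phiB k w : continuous (phiB thetainv psi k w).
Proof.
elim: k => [|k IH] x /=; first exact: cvg_id.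
by apply: continuous_comp; [apply: IH | apply: cpsi].
Qed.

Lemma continuous_phiZ n w : continuous (phiZ theta thetainv phi psi n w).
Proof. by case: n => k; [apply: continuous_phiN | apply: continuous_phiB]. Qed.

Hypothesis cN : forall w, compact (N w).

Lemma Inv_nonempty w : (forall n, survival theta phi N (n + n) (iter n thetainv w)) ->
  Defs.Inv theta thetainv phi psi N w !=set0.
Proof.
move=> /choice[y Hy]; pose z n := phiN theta phi n (iter n thetainv w) (y n).
have fwd n k : (k <= n)%N -> N (iter k theta w) (phiN theta phi k w (z n)).
  move=> kn; have := Hy n (n + k)%N; rewrite leq_add2l => /(_ kn).
  by rewrite phiN_add iter_thetainvK addnC iterD iter_thetainvK.
have bwd n j : (j < n)%N ->
    N (iter j.+1 thetainv w) (phiB thetainv psi j.+1 w (z n)).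
  move=> jn; rewrite /z.
  have := phiB_phiN j.+1 (n - j.+1) (iter n thetainv w) (y n).
  have := iter_thetainv_theta j.+1 (n - j.+1) (iter n thetainv w).
  rewrite subnK // iter_thetainvK => -> ->.
  by apply: Hy; rewrite (leq_trans (leq_subr _ _) (leq_addr _ _)).
have [i|i|m|i|x Nx Invx] := compact_constraints_solution
  (C := fun n => N (thetaZ theta thetainv n w))
  (F := fun n => phiZ theta thetainv phi psi n w) (z := z) (@cN w).
- by apply: compact_closed (@cN _); apply: metric_hausdorff.
- exact: continuous_phiZ.
- exact: fwd m 0%N (leq0n m).
- case: i => [k|j]; first by exists k => m km; apply: fwd.
  by exists j.+1 => m jm; apply: bwd.
- by exists x.
Qed.

End BackwardOrbits.

Theorem mainTheorem11 (R : realType) (d : measure_display) (Omega : measurableType d)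
    (P : probability Omega R) (theta thetainv : Omega -> Omega)
    (X : metricType R) (phi psi : Omega -> X -> X) (S : Omega -> set X) :
  invertible_mp P theta thetainv ->
  complete_space X -> locally_compact [set: X] -> separable_space X ->
  random_homeo phi psi ->
  isolated_invariant theta thetainv phi psi S ->
  nontrivial_index P theta thetainv phi psi S ->
  ergodic P theta ->
  {ae P, forall w, S w !=set0}.
Proof.
move=> [thetaK thetainvK mtheta mthetainv ptheta] _ _ [D [cD dD]] [mphi homeo] _.
move=> [N [L [[[[[cN mN] _] SInv _ _ _] _] nontriv]]] erg.
have phiK w : cancel (phi w) (psi w) by case: (homeo w).
have cphi w : continuous (phi w) by case: (homeo w).
have cpsi w : continuous (psi w) by case: (homeo w).
have mG := survival_measurable cD dD mtheta cphi mphi cN mN.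
pose E := \bigcap_n survival theta phi N n.
have mE : measurable E by apply: bigcap_measurableType => n _.
have Einv : E `<=` theta @^-1` E by move=> w Ew n _; apply/survivalS/Ew.
have [PE0|PEc0] := ergodic_subinvariant mtheta ptheta mE Einv erg.
  by case: nontriv; apply: shift_equiv_trivial => //; apply/negligibleP.
have pthetainv := preserves_cancel thetaK mthetainv ptheta.
apply: filterS (ae_forall_iter mthetainv pthetainv mE PEc0) => w Ew.
by rewrite SInv; apply: Inv_nonempty => // n; apply: Ew.
Qed.
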